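(* Let $E$ be a finite-dimensional real affine space and let $G(E)$ be the set of generalized affine functions on $E$, equipped with the topology of pointwise convergence. Then $G(E)$ is a first countable topological space.
   Context: A generalized affine function on $E$ is a function $E\to\overline{\mathbb{R}}=\mathbb{R}\cup\{\pm\infty\}$ that is both convex and concave (extended-real-valued sense). The topology of pointwise convergence is the subspace topology from the product topology on $\overline{\mathbb{R}}^{E}$, with $\overline{\mathbb{R}}$ carrying its usual order topology. *)

From HB Require Import structures.
From mathcomp Require Import all_boot all_order all_algebra.
From mathcomp Require Import all_classical all_reals all_analysis.
Set Implicit Arguments. Unset Strict Implicit. Unset Printing Implicit Defensive.
Import Order.TTheory GRing.Theory Num.Theory.
Local Open Scope classical_set_scope.
Local Open Scope ring_scope.

(* Convexity of an extended-real-valued function (epigraph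
   {(x, mu) in E x R | f x <= mu} is convex). *)
Definition ext_convex (R : realType) (n : nat) (f : 'rV[R]_n -> \bar R) : Prop :=
  forall (x y : 'rV[R]_n) (a b t : R), 0 <= t <= 1 ->
    (f x <= a%:E)%E -> (f y <= b%:E)%E ->
    (f ((1 - t) *: x + t *: y)%R <= ((1 - t) * a + t * b)%:E)%E.

(* Concavity (hypograph {(x, mu) | mu <= f x} is convex). *)
Definition ext_concave (R : realType) (n : nat) (f : 'rV[R]_n -> \bar R) : Prop :=
  forall (x y : 'rV[R]_n) (a b t : R), 0 <= t <= 1 ->
    (a%:E <= f x)%E -> (b%:E <= f y)%E ->
    (((1 - t) * a + t * b)%:E <= f ((1 - t) *: x + t *: y)%R)%E.

Definition gen_affine (R : realType) (n : nat) : set {ptws 'rV[R]_n -> \bar R} :=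
  [set f | ext_convex f /\ ext_concave f].

Definition GA (R : realType) (n : nat) : topologicalType :=
  set_type (@gen_affine R n).

Definition first_countable (T : topologicalType) : Prop :=
  forall x : T, exists B : nat -> set T,
    (forall k, nbhs x (B k)) /\ (forall U, nbhs x U -> exists k, B k `<=` U).

From mathcomp Require Import all_boot all_order all_algebra.
From mathcomp Require Import all_classical all_reals all_analysis.
From mathcomp Require Import ring lra.
Set Implicit Arguments. Unset Strict Implicit. Unset Printing Implicit Defensive.
Import Order.TTheory GRing.Theory Num.Theory.
Local Open Scope classical_set_scope.
Local Open Scope ring_scope.
Import numFieldNormedType.Exports.

(* A generalized affine function g has convex strict level sets {g > a} and
   {g < a} whose complements {g <= a} and {g >= a} are convex as well: they are
   hemispaces.  A hemispace C of R^n is the convex hull of a countable subset of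
   C.  This goes by induction on the dimension of a coordinate flat containing C:
   every slice C /\ {x_j = q}, q rational, is a hemispace of a smaller flat; C
   has at most one extreme point, and every other point of C is the midpoint of
   a segment of C, which crosses two rational slices on either side of it.
   Hence there is a countable set D with {f > a} = conv (D /\ {f > a}) and
   {f < a} = conv (D /\ {f < a}) for all rational a.  The finite sets of
   conditions g d > a or g d < a (d in D, a rational) satisfied by f then give
   a countable neighbourhood base at f: if f x > a, then x is a convex
   combination of finitely many d with f d > a, and every generalized affine g
   with g d > a at these d has g x > a, since {g > a} is convex. *)

Lemma countable_range_union (I : countType) (T : Type) (x0 : T) (E : I -> nat -> T) :
  exists e : nat -> T, forall i, range (E i) `<=` range e.
Proof.
exists (fun k => if unpickle k is Some (i, m) then E i m else x0).
by move=> i _ [m _ <-]; exists (pickle (i, m)); rewrite ?pickleK.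
Qed.

Lemma seq_in_range (T : eqType) (e : nat -> T) (s : seq T) :
  (forall y, y \in s -> range e y) -> exists ks, s = map e ks.
Proof.
elim: s => [|y s IH] s_e; first by exists [::].
have [k _ <-] := s_e y (mem_head _ _).
have [|ks ->] := IH; first by move=> z zs; apply: s_e; rewrite in_cons zs orbT.
by exists (k :: ks).
Qed.

Section ConvexHull.
Variables (R : realFieldType) (V : lmodType R).
Implicit Types (D S C : set V) (x y w : V).

Definition is_convex S :=
  forall x y (t : R), 0 <= t <= 1 -> S x -> S y -> S ((1 - t) *: x + t *: y).

Definition is_flat S :=
  forall x y (t : R), S x -> S y -> S ((1 - t) *: x + t *: y).

Definition conv_hull D : set V :=
  [set x | exists s : seq (R * V), [/\ forall p, p \in s -> 0 <= p.1 /\ D p.2,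
     \sum_(p <- s) p.1 = 1 & x = \sum_(p <- s) p.1 *: p.2]].

Lemma is_convexI S C : is_convex S -> is_convex C -> is_convex (S `&` C).
Proof. by move=> cS cC x y t t01 [Sx Cx] [Sy Cy]; split; [apply: cS|apply: cC]. Qed.

Lemma line_comb x w a b t :
  (1 - t) *: (x + a *: w) + t *: (x + b *: w) = x + ((1 - t) * a + t * b) *: w.
Proof.
by rewrite !scalerDr !scalerA addrACA -!scalerDl subrK scale1r.
Qed.

Lemma convex_between S x w a b :
  is_convex S -> S (x + a *: w) -> S (x + b *: w) -> a < 0 < b -> S x.
Proof.
move=> cS Sa Sb /andP[a_lt0 b_gt0].
have ba_gt0 : 0 < b - a by lra.
pose t := - a / (b - a).
have t01 : 0 <= t <= 1.
  by rewrite divr_ge0 ?ler_pdivrMr //=; lra.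
have := cS _ _ _ t01 Sa Sb; rewrite line_comb.
suff -> : (1 - t) * a + t * b = 0 by rewrite scale0r addr0.
by rewrite /t; field; rewrite gt_eqF.
Qed.

Lemma convex_segment S x w l :
  is_convex S -> S (x - w) -> S (x + w) -> -1 <= l <= 1 -> S (x + l *: w).
Proof.
move=> cS Sm Sp /andP[l_ge l_le].
have t01 : 0 <= (1 + l) / 2 <= 1 by apply/andP; split; lra.
rewrite -scaleN1r in Sm; rewrite -[w in x + w]scale1r in Sp.
have := cS _ _ _ t01 Sm Sp; rewrite line_comb.
suff -> : (1 - (1 + l) / 2) * -1 + (1 + l) / 2 * 1 = l by [].
by field.
Qed.

Lemma sum_scale_eq0 (s : seq (R * V)) :
  (forall p, p \in s -> 0 <= p.1) -> \sum_(p <- s) p.1 = 0 ->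
  \sum_(p <- s) p.1 *: p.2 = 0.
Proof.
move=> s_ge0; rewrite big_seq => /eqP; rewrite psumr_eq0 // => /allP s0.
rewrite big_seq big1 // => p ps.
by move: (s0 p ps); rewrite ps => /eqP ->; rewrite scale0r.
Qed.

Lemma convex_sum_scale S (s : seq (R * V)) :
  is_convex S -> (forall p, p \in s -> 0 <= p.1 /\ S p.2) ->
  0 < \sum_(p <- s) p.1 -> S ((\sum_(p <- s) p.1)^-1 *: \sum_(p <- s) p.1 *: p.2).
Proof.
move=> cS; elim: s => [|[l p] s IH] s_ok; first by rewrite big_nil ltxx.
have s_ok' q : q \in s -> 0 <= q.1 /\ S q.2.
  by move=> qs; apply: s_ok; rewrite in_cons qs orbT.
have [l_ge0 Sp] : 0 <= l /\ S p by exact: (s_ok (l, p) (mem_head _ _)).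
have T_ge0 : 0 <= \sum_(q <- s) q.1 by rewrite big_seq sumr_ge0 // => q /s_ok' [].
rewrite !big_cons /=; set T := \sum_(q <- s) q.1.
move=> lT_gt0; have lT_neq0 : l + T != 0 by rewrite gt_eqF.
have [T0|T_gt0] := eqVneq T 0.
  rewrite sum_scale_eq0 // => [|q /s_ok' []//].
  have l_neq0 : l != 0 by move: lT_neq0; rewrite T0 addr0.
  by rewrite T0 !addr0 scalerA mulVf ?scale1r.
have {}T_gt0 : 0 < T by rewrite lt0r T_gt0 T_ge0.
have t01 : 0 <= T / (l + T) <= 1.
  by rewrite divr_ge0 ?ler_pdivrMr ?(ltW T_gt0) //=; lra.
have := cS _ _ _ t01 Sp (IH s_ok' T_gt0).
congr S; rewrite scalerDr !scalerA; congr (_ *: _ + _ *: _).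
  by field.
by rewrite -/T; field; rewrite lT_neq0 gt_eqF.
Qed.

Lemma conv_hull_min D S : is_convex S -> D `<=` S -> conv_hull D `<=` S.
Proof.
move=> cS DS x [s [s_ok s1 ->]].
have s_ok' p : p \in s -> 0 <= p.1 /\ S p.2.
  by move=> ps; have [p_ge0 /DS Sp] := s_ok p ps.
by have := convex_sum_scale cS s_ok'; rewrite s1 invr1 scale1r ltr01; apply.
Qed.

Lemma sub_conv_hull D : D `<=` conv_hull D.
Proof.
move=> x Dx; exists [:: (1, x)]; split; last by rewrite !big_seq1 scale1r.
- by move=> p; rewrite inE => /eqP -> /=.
- by rewrite big_seq1.
Qed.

Lemma conv_hull_mono D D' : D `<=` D' -> conv_hull D `<=` conv_hull D'.
Proof.
move=> DD' x [s [s_ok s1 ->]].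
by exists s; split => // p /s_ok[p_ge0 /DD' D'p].
Qed.

Lemma convex_conv_hull D : is_convex (conv_hull D).
Proof.
move=> x y t /andP[t_ge0 t_le1] [s1 [ok1 w1 ->]] [s2 [ok2 w2 ->]].
exists ([seq ((1 - t) * p.1, p.2) | p <- s1] ++ [seq (t * p.1, p.2) | p <- s2]).
split.
- move=> p; rewrite mem_cat => /orP[] /mapP[q qs ->] /=.
    by have [q_ge0 Dq] := ok1 q qs; rewrite mulr_ge0 // subr_ge0.
  by have [q_ge0 Dq] := ok2 q qs; rewrite mulr_ge0.
- by rewrite big_cat !big_map /= -!mulr_sumr w1 w2 !mulr1 subrK.
- rewrite big_cat !big_map /= !scaler_sumr.
  by congr (_ + _); apply: eq_bigr => p _; rewrite scalerA.
Qed.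

Definition extreme_point C x := C x /\ forall w, C (x + w) -> C (x - w) -> w = 0.

Lemma extreme_point_unique F C :
  is_flat F -> C `<=` F -> is_convex C -> is_convex (F `&` ~` C) ->
  is_subset1 (extreme_point C).
Proof.
move=> fF CF cC cFC x y [Cx x_ext] [Cy y_ext]; have [//|xy] := eqVneq x y.
(* x - w/2 and y + w/2 lie in F but not in C, yet x is a convex combination of
   them. *)
exfalso; pose w := y - x; have w_neq0 : w != 0 by rewrite subr_eq0 eq_sym.
have line a : x + a *: w = (1 - a) *: x + a *: y.
  have := line_comb x w 0 1 a.
  by rewrite scale0r addr0 scale1r /w subrKC mulr0 add0r mulr1 => <-.
have Fline a : F (x + a *: w) by rewrite line; apply: fF; apply: CF.
have from_y c : y + c *: w = x + (1 + c) *: w.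
  by rewrite scalerDl scale1r addrA /w subrKC.
have half_neq0 : (2 : R)^-1 != 0 by rewrite invr_eq0 pnatr_eq0.
have Cmid : C (x + 2^-1 *: w) by rewrite line; apply: cC => //; lra.
have nC_left : ~ C (x + (- 2^-1) *: w).
  move=> Cl; move: (x_ext (2^-1 *: w) Cmid); rewrite -scaleNr => /(_ Cl) /eqP.
  by rewrite scaler_eq0 (negPf half_neq0) (negPf w_neq0).
have nC_right : ~ C (x + (1 + 2^-1) *: w).
  move=> Cr; move: (y_ext (2^-1 *: w)); rewrite -scaleNr !from_y.
  have -> : 1 - 2^-1 = 2^-1 :> R by field.
  by move=> /(_ Cr Cmid) /eqP; rewrite scaler_eq0 (negPf half_neq0) (negPf w_neq0).
have t01 : 0 <= (4 : R)^-1 <= 1 by lra.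
have := cFC _ _ _ t01 (conj (Fline _) nC_left) (conj (Fline _) nC_right).
rewrite line_comb; have -> : (1 - 4^-1) * - 2^-1 + 4^-1 * (1 + 2^-1) = 0 :> R by field.
by rewrite scale0r addr0 => -[].
Qed.

Definition countably_generated C := exists e : nat -> V, C `<=` conv_hull (range e `&` C).

Lemma subset1_countably_generated C : is_subset1 C -> countably_generated C.
Proof.
move=> C1; exists (fun=> xget 0 C) => x Cx; apply: sub_conv_hull.
by rewrite (xget_subset1 0 Cx C1); split => //; exists 0%N.
Qed.

Lemma countably_generated_cover (I : countType) C (Cs : I -> set V) :
  (forall i, Cs i `<=` C) -> (forall i, countably_generated (Cs i)) ->
  C `<=` conv_hull (\bigcup_i Cs i) -> countably_generated C.
Proof.
move=> CsC Cs_gen Chull; have [E HE] := choice Cs_gen.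
have [e Ee] := countable_range_union 0 E.
exists e => x /Chull; apply: conv_hull_min; first exact: convex_conv_hull.
move=> y [i _ /HE]; apply: conv_hull_mono => z [/(Ee i) ez /(CsC i) Cz].
by split.
Qed.

Lemma conv_hull_range_finite (e : nat -> V) P x :
  conv_hull (range e `&` P) x ->
  exists ks : seq nat, (forall k, k \in ks -> P (e k)) /\
    forall S, is_convex S -> (forall k, k \in ks -> S (e k)) -> S x.
Proof.
move=> [s [s_ok s1 xE]]; pose pts := [seq p.2 | p <- s].
have [ks ptsE] : exists ks, pts = map e ks.
  apply: seq_in_range => y /mapP[p ps ->]; exact: (s_ok p ps).2.1.
have eks k : k \in ks -> exists2 p, p \in s & e k = p.2.
  by move=> kks; apply/mapP; rewrite -/pts ptsE map_f.
exists ks; split => [k /eks[p ps ->]|S cS Sks]; first exact: (s_ok p ps).2.2.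
have x_hull : conv_hull [set y | y \in pts] x.
  by exists s; split => // p ps; split; [exact: (s_ok p ps).1 | exact: map_f].
apply: conv_hull_min cS _ _ x_hull => y /=; rewrite ptsE => /mapP[k kks ->].
exact: Sks.
Qed.

End ConvexHull.

Section Hemispace.
Variables (R : realType) (n : nat).
Implicit Types (C : set 'rV[R]_n) (x w : 'rV[R]_n).

Definition coord_flat (J : {set 'I_n}) (c : 'I_n -> R) : set 'rV[R]_n :=
  [set x | forall i, i \notin J -> x 0 i = c i].

Lemma coord_flat_is_flat J c : is_flat (coord_flat J c).
Proof. by move=> x y t Fx Fy i iJ; rewrite !mxE Fx // Fy //; ring. Qed.

Lemma is_convex_coord_eq j (r : R) : is_convex [set x : 'rV[R]_n | x 0 j = r].
Proof. by move=> x y t _ /= xj yj; rewrite !mxE xj yj; ring. Qed.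

Lemma exists_rat_on_line (a b x w : R) : a < b -> 0 < w ->
  exists2 l, a < l < b & exists q : rat, x + l * w = ratr q.
Proof.
move=> ab w_gt0; have [q] : exists q : rat, ratr q \in `](x + a * w), (x + b * w)[.
  by apply: rat_in_itvoo; rewrite ltrD2l ltr_pM2r.
rewrite in_itv /= => /andP[q_gt q_lt].
exists ((ratr q - x) / w); last by exists q; field; rewrite gt_eqF.
by apply/andP; split; [rewrite ltr_pdivlMr | rewrite ltr_pdivrMr] => //; lra.
Qed.

Lemma rat_slices_hull C x w i : is_convex C -> C (x + w) -> C (x - w) -> w 0 i != 0 ->
  conv_hull (\bigcup_(q : rat) (C `&` [set y | y 0 i = ratr q])) x.
Proof.
move=> cC; wlog wi_gt0 : w / 0 < w 0 i.
  move=> gen Cxw Cxw' wi_neq0; case: (ltrgtP (w 0 i) 0) => [wi_lt0|wi_gt0|wi0].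
  - by apply: (gen (- w)); rewrite ?opprK ?mxE ?oppr_eq0 ?oppr_gt0.
  - exact: (gen w).
  - by rewrite wi0 eqxx in wi_neq0.
move=> Cxw Cxw' _.
have on_slice l q : -1 < l < 1 -> x 0 i + l * w 0 i = ratr q ->
    conv_hull (\bigcup_(q : rat) (C `&` [set y | y 0 i = ratr q])) (x + l *: w).
  move=> /andP[l_gt l_lt] xq; apply: sub_conv_hull; exists q => //.
  split; last by rewrite /= !mxE.
  by apply: convex_segment => //; apply/andP; split; lra.
have [l1 /andP[l1_gt l1_lt] [q1 q1E]] := exists_rat_on_line (x 0 i) (ltrN10 R) wi_gt0.
have [l2 /andP[l2_gt l2_lt] [q2 q2E]] := exists_rat_on_line (x 0 i) ltr01 wi_gt0.
have hull1 := on_slice l1 q1 (_ : -1 < l1 < 1) q1E.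
have hull2 := on_slice l2 q2 (_ : -1 < l2 < 1) q2E.
apply: convex_between (@convex_conv_hull _ _ _) (hull1 _) (hull2 _) _.
- by apply/andP; split; lra.
- by apply/andP; split; lra.
- by rewrite l1_lt l2_gt.
Qed.

Lemma hemispace_slices J c C :
  C `<=` coord_flat J c -> is_convex C -> is_convex (coord_flat J c `&` ~` C) ->
  (forall j (q : rat), j \in J ->
     countably_generated (C `&` [set x | x 0 j = ratr q])) ->
  countably_generated C.
Proof.
move=> CF cC cFC slices.
pose Cs (jq : option ('I_n * rat)) : set 'rV[R]_n := if jq is Some (j, q) then
  (if j \in J then C `&` [set x | x 0 j = ratr q] else set0) else extreme_point C.
apply: (countably_generated_cover (Cs := Cs)).
- by case=> [[j q]|]; rewrite /Cs; [case: ifP => _ x // [] | move=> x []].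
- case=> [[j q]|]; rewrite /Cs; last first.
    apply: subset1_countably_generated.
    exact: (extreme_point_unique (@coord_flat_is_flat J c) CF cC cFC).
  by case: ifP => jJ; [exact: slices | exact: subset1_countably_generated].
move=> x Cx.
have [[w [Cxw Cxw' w_neq0]]|no_seg] :=
  pselect (exists w, [/\ C (x + w), C (x - w) & w != 0]); last first.
  apply: sub_conv_hull; exists None => //; split => // w Cxw Cxw'.
  by apply: contra_notP no_seg => /eqP w_neq0; exists w.
have [i wi_neq0] : exists i, w 0 i != 0.
  apply: contra_notP (negP w_neq0) => no_i; apply/eqP/rowP => i; rewrite mxE.
  by apply: contra_notP no_i => /eqP wi_neq0; exists i.
have iJ : i \in J.
  apply: contraT => iJ; have := CF _ Cxw i iJ; rewrite !mxE (CF _ Cx i iJ) => h.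
  have wi0 : w 0 i = 0 by lra.
  by rewrite wi0 eqxx in wi_neq0.
apply: conv_hull_mono (rat_slices_hull cC Cxw Cxw' wi_neq0) => y [q _ Sy].
by exists (Some (i, q)) => //; rewrite /Cs iJ.
Qed.

Lemma hemispace_flat_countably_generated k (J : {set 'I_n}) c C : (#|J| <= k)%N ->
  C `<=` coord_flat J c -> is_convex C -> is_convex (coord_flat J c `&` ~` C) ->
  countably_generated C.
Proof.
elim: k J c C => [|k IH] J c C J_le CF cC cFC;
  apply: (hemispace_slices CF cC cFC) => j q jJ.
  by move: J_le; rewrite leqn0 cards_eq0 => /eqP J0; rewrite J0 inE in jJ.
pose c' i := if i == j then ratr q else c i.
have flatE : coord_flat (J :\ j) c' = coord_flat J c `&` [set x | x 0 j = ratr q].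
  apply/seteqP; split => x /=.
    move=> Fx; split => [i iJ|]; last by rewrite Fx ?setD11 // /c' eqxx.
    have ij : i != j by apply: contraNneq iJ => ->.
    by rewrite Fx ?in_setD1 ?(negPf iJ) ?andbF // /c' (negPf ij).
  move=> [Fx xj] i; rewrite in_setD1 negb_and negbK /c'.
  by case: eqP => [-> | _ /= /Fx].
apply: (IH (J :\ j) c').
- by move: J_le; rewrite (cardsD1 j J) jJ.
- by rewrite flatE; apply: setSI.
- exact: is_convexI cC (@is_convex_coord_eq j _).
- rewrite flatE => x y t t01 [[Fx xj] nCx] [[Fy yj] nCy].
  have nCx' : ~ C x by move=> Cx; apply: nCx.
  have nCy' : ~ C y by move=> Cy; apply: nCy.
  have [Fz nCz] := cFC x y t t01 (conj Fx nCx') (conj Fy nCy').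
  by split; [split => //; exact: is_convex_coord_eq | move=> [/nCz]].
Qed.

Theorem hemispace_countably_generated C :
  is_convex C -> is_convex (~` C) -> countably_generated C.
Proof.
move=> cC cCc.
apply: (@hemispace_flat_countably_generated _ [set: 'I_n] (fun=> 0) C (leqnn _)) cC _.
- by move=> x _ i; rewrite inE.
- by move=> x y t t01 [_ nCx] [_ nCy]; split; [move=> i; rewrite inE | exact: cCc].
Qed.

End Hemispace.

Section RationalRays.
Variable R : realType.

Definition in_rat_ray (p : rat * bool) (z : \bar R) : Prop :=
  if p.2 then ((ratr p.1)%:E < z)%E else (z < (ratr p.1)%:E)%E.

Lemma in_rat_ray_nbhs p y : in_rat_ray p y -> nbhs y (in_rat_ray p).
Proof. by case: p => a [] /=; [exact: open_ereal_gt' | exact: open_ereal_lt']. Qed.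

Lemma ereal_nbhs_rat_rays (y : \bar R) (W : set (\bar R)) : nbhs y W ->
  exists s : seq (rat * bool), (forall p, p \in s -> in_rat_ray p y) /\
    forall z, (forall p, p \in s -> in_rat_ray p z) -> W z.
Proof.
case: y => [r| |] Wn.
- move: Wn; rewrite /nbhs /= => /nbhs_ballP[eps /= eps_gt0 rW].
  have [q1] : exists q : rat, ratr q \in `](r - eps), r[ by apply: rat_in_itvoo; lra.
  rewrite in_itv /= => /andP[q1_gt q1_lt].
  have [q2] : exists q : rat, ratr q \in `]r, (r + eps)[ by apply: rat_in_itvoo; lra.
  rewrite in_itv /= => /andP[q2_gt q2_lt].
  exists [:: (q1, true); (q2, false)]; split => [p|z zs].
    by rewrite !inE => /orP[] /eqP ->; rewrite /in_rat_ray /= lte_fin.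
  have z_gt := zs (q1, true) (mem_head _ _).
  have z_lt : in_rat_ray (q2, false) z by apply: zs; rewrite !inE eqxx orbT.
  move: z_lt z_gt {zs}; rewrite /in_rat_ray /=.
  case: z => [s| |] s_lt s_gt; last by rewrite ltNge leNye in s_gt.
    apply: rW; rewrite -ball_normE /ball_ /= ltr_distlC.
    by rewrite !lte_fin in s_lt s_gt; apply/andP; split; lra.
  by rewrite ltNge leey in s_lt.
- case: Wn => M [_ MW].
  have [q] : exists q : rat, ratr q \in `]M, (M + 1)[ by apply: rat_in_itvoo; lra.
  rewrite in_itv /= => /andP[q_gt _].
  exists [:: (q, true)]; split => [p|z zs].
    by rewrite inE => /eqP ->; rewrite /in_rat_ray /= ltry.
  by apply: MW; apply: lt_trans (zs _ (mem_head _ _)); rewrite lte_fin.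
- case: Wn => M [_ MW].
  have [q] : exists q : rat, ratr q \in `](M - 1), M[ by apply: rat_in_itvoo; lra.
  rewrite in_itv /= => /andP[_ q_lt].
  exists [:: (q, false)]; split => [p|z zs].
    by rewrite inE => /eqP ->; rewrite /in_rat_ray /= ltNyr.
  by apply: MW; apply: lt_trans (zs _ (mem_head _ _)) _; rewrite lte_fin.
Qed.

End RationalRays.

Lemma ereal_lt_fin_le (R : realType) (u : \bar R) (a : R) :
  (u < a%:E)%E -> exists2 b : R, (u <= b%:E)%E & b < a.
Proof.
case: u => [r| |] //=; first by rewrite lte_fin => ra; exists r.
by move=> _; exists (a - 1); [exact: leNye | lra].
Qed.

Lemma ereal_gt_fin_ge (R : realType) (u : \bar R) (a : R) :
  (a%:E < u)%E -> exists2 b : R, (b%:E <= u)%E & a < b.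
Proof.
case: u => [r| |] //=; first by rewrite lte_fin => ra; exists r.
by move=> _; exists (a + 1); [exact: leey | lra].
Qed.

Section LevelSets.
Variables (R : realType) (n : nat) (f : 'rV[R]_n -> \bar R).

Lemma ext_convex_lt (a : R) : ext_convex f -> is_convex [set x | (f x < a%:E)%E].
Proof.
move=> cf x y t t01 /ereal_lt_fin_le[b1 fx b1a] /ereal_lt_fin_le[b2 fy b2a] /=.
have := cf x y (Num.max b1 b2) (Num.max b1 b2) t t01.
rewrite -mulrDl subrK mul1r => /(_ _ _)/le_lt_trans; apply.
- by rewrite (le_trans fx) // lee_fin le_max lexx.
- by rewrite (le_trans fy) // lee_fin le_max lexx orbT.
- by rewrite lte_fin gt_max b1a b2a.
Qed.

Lemma ext_convex_not_gt (a : R) :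
  ext_convex f -> is_convex (~` [set x | (a%:E < f x)%E]).
Proof.
move=> cf x y t t01 /negP; rewrite -leNgt => fx /negP; rewrite -leNgt => fy.
apply/negP; rewrite -leNgt.
by have := cf x y a a t t01 fx fy; rewrite -mulrDl subrK mul1r.
Qed.

Lemma ext_concave_gt (a : R) : ext_concave f -> is_convex [set x | (a%:E < f x)%E].
Proof.
move=> cf x y t t01 /ereal_gt_fin_ge[b1 fx b1a] /ereal_gt_fin_ge[b2 fy b2a] /=.
have := cf x y (Num.min b1 b2) (Num.min b1 b2) t t01.
rewrite -mulrDl subrK mul1r => /(_ _ _)/(lt_le_trans _); apply.
- by rewrite lte_fin lt_min b1a b2a.
- by rewrite (le_trans _ fx) // lee_fin ge_min lexx.
- by rewrite (le_trans _ fy) // lee_fin ge_min lexx orbT.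
Qed.

Lemma ext_concave_not_lt (a : R) :
  ext_concave f -> is_convex (~` [set x | (f x < a%:E)%E]).
Proof.
move=> cf x y t t01 /negP; rewrite -leNgt => fx /negP; rewrite -leNgt => fy.
apply/negP; rewrite -leNgt.
by have := cf x y a a t t01 fx fy; rewrite -mulrDl subrK mul1r.
Qed.

Lemma rat_ray_hemispace p : ext_convex f -> ext_concave f ->
  is_convex [set x | in_rat_ray p (f x)] /\ is_convex (~` [set x | in_rat_ray p (f x)]).
Proof.
case: p => a [] cf cc; rewrite /in_rat_ray /=.
- by split; [exact: ext_concave_gt | exact: ext_convex_not_gt].
- by split; [exact: ext_convex_lt | exact: ext_concave_not_lt].
Qed.

Lemma rat_ray_hull_enum : ext_convex f -> ext_concave f ->
  exists e : nat -> 'rV[R]_n, forall p x, in_rat_ray p (f x) ->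
    conv_hull (range e `&` [set y | in_rat_ray p (f y)]) x.
Proof.
move=> cf cc; have gen p : countably_generated [set x | in_rat_ray p (f x)].
  by have [] := rat_ray_hemispace p cf cc; exact: hemispace_countably_generated.
have [E HE] := choice gen; have [e Ee] := countable_range_union 0 E.
exists e => p x /HE; apply: conv_hull_mono => y [/(Ee p) ey fy].
by split.
Qed.

End LevelSets.

Lemma filter_forall_seq (T : Type) (I : eqType) (F : set_system T) (s : seq I)
    (P : I -> set T) :
  Filter F -> (forall i, i \in s -> F (P i)) -> F [set x | forall i, i \in s -> P i x].
Proof.
move=> FF; elim: s => [|i s IH] Fs; first by apply: filterS filterT => x _ i.
apply: filterS (filterI (Fs i (mem_head _ _)) (IH _)) => [x [Pix Psx] j|j js].
  by rewrite in_cons => /orP[/eqP ->|/Psx].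
by apply: Fs; rewrite in_cons js orbT.
Qed.

Lemma set_type_cvg (X : topologicalType) (A : set X) (F : set_system (set_type A))
    (x : set_type A) :
  Filter F -> set_val @ F --> set_val x -> F --> x.
Proof.
move=> FF Fx U; rewrite nbhsE => -[_ [[W oW <-] Wx] WU].
by rewrite nbhs_filterE; apply: filterS WU _; apply: Fx; apply: open_nbhs_nbhs.
Qed.

Lemma set_type_ptws_cvg (T : topologicalType) (U : uniformType) (A : set {ptws T -> U})
    (F : set_system (set_type A)) (f : set_type A) :
  Filter F -> (forall t W, nbhs (set_val f t) W -> F [set g | W (set_val g t)]) ->
  F --> f.
Proof.
move=> FF Fpt; apply: set_type_cvg.
suff : {ptws, set_val @ F --> set_val f} by [].
by apply/pointwise_cvgP => t W /Fpt.
Qed.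

Lemma set_type_ptws_eval_continuous (T : topologicalType) (U : topologicalType)
    (A : set {ptws T -> U}) (t : T) :
  continuous (fun g : set_type A => set_val g t).
Proof.
move=> g; apply: (@continuous_comp _ {ptws T -> U} _ set_val (fun h => h t)).
  exact: initial_continuous.
exact: proj_continuous.
Qed.

Lemma GA_gen_affine (R : realType) (n : nat) (g : GA R n) :
  ext_convex (set_val g) /\ ext_concave (set_val g).
Proof. exact: set_valP g. Qed.

Section RayBasis.
Variables (R : realType) (n : nat) (f : GA R n) (e : nat -> 'rV[R]_n).
Hypothesis f_hull : forall p x, in_rat_ray p (set_val f x) ->
  conv_hull (range e `&` [set y | in_rat_ray p (set_val f y)]) x.

Definition ray_basis (s : seq (nat * (rat * bool))) : set (GA R n) :=
  [set g | forall kp, kp \in s ->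
     in_rat_ray kp.2 (set_val f (e kp.1)) -> in_rat_ray kp.2 (set_val g (e kp.1))].

Lemma ray_basis_nbhs s : nbhs f (ray_basis s).
Proof.
apply: filter_forall_seq => -[k p] _ /=.
have [fp|nfp] := pselect (in_rat_ray p (set_val f (e k))); last first.
  by apply: filterS filterT => g _ /nfp.
have fk : nbhs f [set g : GA R n | in_rat_ray p (set_val g (e k))] :=
  @set_type_ptws_eval_continuous _ _ _ (e k) f _ (in_rat_ray_nbhs fp).
by apply: filterS fk => g gp _.
Qed.

Lemma ray_basis_filter : Filter (filter_from setT ray_basis).
Proof.
apply: filter_from_filter; first by exists [::].
move=> s1 s2 _ _; exists (s1 ++ s2) => // g gs.
by split => kp kps; apply: gs; rewrite mem_cat kps ?orbT.
Qed.

Lemma ray_basis_rat_ray p x : in_rat_ray p (set_val f x) ->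
  filter_from setT ray_basis [set g | in_rat_ray p (set_val g x)].
Proof.
move=> /f_hull/conv_hull_range_finite[ks [ks_f ks_hull]].
exists [seq (k, p) | k <- ks] => // g gs.
apply: (ks_hull [set y | in_rat_ray p (set_val g y)]).
  by have [cg cc] := GA_gen_affine g; have [] := rat_ray_hemispace p cg cc.
by move=> k kks; apply: (gs (k, p)); [exact: map_f | exact: ks_f].
Qed.

Lemma ray_basis_cvg : filter_from setT ray_basis --> f.
Proof.
have FF := ray_basis_filter.
apply: set_type_ptws_cvg => t W /ereal_nbhs_rat_rays[s [fs sW]].
have := filter_forall_seq FF (fun p ps => ray_basis_rat_ray (fs p ps)).
by apply: filterS => g /sW.
Qed.

End RayBasis.

Theorem theorem3 (R : realType) (n : nat) : first_countable (GA R n).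
Proof.
move=> f; have [cf cc] := GA_gen_affine f; have [e f_hull] := rat_ray_hull_enum cf cc.
exists (fun k => if unpickle k is Some s then ray_basis f e s else setT); split.
  by move=> k; case: unpickle => [s|]; [exact: ray_basis_nbhs | exact: filterT].
move=> U /(ray_basis_cvg f_hull)[s _ sU].
by exists (pickle s); rewrite pickleK.
Qed.
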